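(* Let $s=(x,y,u,v)$ with $x,y,u,v\ge0$ and $x+y+u+v>4$, and write $W^k(s)=(x^{(k)},y^{(k)},u^{(k)},v^{(k)})$. (a) If there exists $k\ge0$ with $(x^{(k)}+y^{(k)})(u^{(k)}+v^{(k)})<4$, then $\lim_{n\to\infty}W^n(s)=(0,0,0,0)$. (b) If $\max\{\tfrac{xu}{4},\tfrac{yu}{16},\tfrac{yv}{9}\}>1$, then at least one coordinate of $W^n(s)$ tends to $+\infty$ as $n\to\infty$.
   Context: $W:\mathbb{R}^4\to\mathbb{R}^4$ is the map $W(x,y,u,v)=(x',y',u',v')$ with $x'=\tfrac12 xu+\tfrac14 yu$, $y'=\tfrac12 xv+\tfrac14 yu+\tfrac13 yv$, $u'=\tfrac12 xu+\tfrac12 xv+\tfrac14 yu+\tfrac13 yv$, $v'=\tfrac14 yu+\tfrac13 yv$. $W^k$ denotes the $k$-fold iterate ($W^0$ the identity). *)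

From Stdlib Require Import Reals.
Open Scope R_scope.

Record R4 := mkR4 { cx : R; cy : R; cu : R; cv : R }.

Definition W (s : R4) : R4 :=
  let x := cx s in let y := cy s in let u := cu s in let v := cv s in
  mkR4 (/2 * x * u + /4 * y * u)
       (/2 * x * v + /4 * y * u + /3 * y * v)
       (/2 * x * u + /2 * x * v + /4 * y * u + /3 * y * v)
       (/4 * y * u + /3 * y * v).

Fixpoint Witer (k : nat) (s : R4) : R4 :=
  match k with
  | O => s
  | S k' => W (Witer k' s)
  end.

(* (a) The product P(s) = (x+y)(u+v) satisfies P(W s) <= P(s)^2/4 and bounds
   every coordinate of W s; once P drops below 4 it therefore decays
   geometrically, dragging all coordinates to 0.
   (b) Each of the quantities xu/4, yu/16, yv/9 at least squares under W, so
   once it exceeds 1 it tends to infinity, and so does the first of its two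
   factors, which dominates the quantity after one more step.
   Neither part uses the hypothesis x + y + u + v > 4. *)
From Stdlib Require Import Reals Lra Lia Psatz.
Open Scope R_scope.

Definition nonneg (s : R4) : Prop :=
  0 <= cx s /\ 0 <= cy s /\ 0 <= cu s /\ 0 <= cv s.

Lemma W_nonneg (s : R4) : nonneg s -> nonneg (W s).
Proof.
  destruct s as [x y u v]; unfold nonneg, W; simpl; intros (?&?&?&?).
  repeat split; nra.
Qed.

Lemma Witer_nonneg (n : nat) (s : R4) : nonneg s -> nonneg (Witer n s).
Proof. induction n; simpl; auto using W_nonneg. Qed.

Lemma Un_cv_0_geometric_bound (f : nat -> R) (C r : R) :
  Rabs r < 1 -> (forall n, 0 <= f n <= C * r ^ n) -> Un_cv f 0.
Proof.
  intros Hr Hf eps Heps.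
  assert (HC : 0 < Rabs C + 1) by (pose proof (Rabs_pos C); lra).
  destruct (pow_lt_1_zero r Hr (eps / (Rabs C + 1))) as [N HN].
  { apply Rdiv_lt_0_compat; lra. }
  exists N; intros n Hn; unfold R_dist; rewrite Rminus_0_r.
  specialize (HN n Hn); specialize (Hf n).
  assert (HCr : C * r ^ n <= Rabs C * Rabs (r ^ n))
    by (rewrite <- Rabs_mult; apply Rle_abs).
  assert (Hbound : Rabs C * Rabs (r ^ n) <= Rabs C * (eps / (Rabs C + 1)))
    by (apply Rmult_le_compat_l; [apply Rabs_pos | lra]).
  assert (Hlt : Rabs C * (eps / (Rabs C + 1)) < eps).
  { apply (Rmult_lt_reg_r (Rabs C + 1)); [lra |].
    unfold Rdiv; rewrite Rmult_assoc, Rmult_assoc, Rinv_l by lra; lra. }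
  rewrite Rabs_right by lra; lra.
Qed.

Lemma quadratic_decay_le (p : nat -> R) (k : nat) :
  (forall n, 0 <= p n) -> (forall n, p (S n) <= p n * p n / 4) -> p k < 4 ->
  forall m, p (m + k)%nat <= p k * (p k / 4) ^ m.
Proof.
  intros Hp Hs Hk.
  assert (Hr : 0 <= p k / 4 < 1) by (pose proof (Hp k); split; lra).
  induction m as [| m IH]; simpl; [lra |].
  assert (Hrm : 0 <= (p k / 4) ^ m <= 1).
  { split; [apply pow_le; lra | rewrite <- (pow1 m); apply pow_incr; lra]. }
  pose proof (Hs (m + k)%nat); pose proof (Hp (m + k)%nat); pose proof (Hp k).
  assert (Hle : p (m + k)%nat <= p k) by nra.
  assert (p (m + k)%nat * p (m + k)%nat / 4 <= p (m + k)%nat * (p k / 4)) by nra.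
  nra.
Qed.

Lemma cv_infty_of_square_growth (q : nat -> R) :
  1 < q 0%nat -> (forall n, 1 < q n -> q n * q n <= q (S n)) -> cv_infty q.
Proof.
  intros H0 Hs.
  assert (Hlin : forall n, q 0%nat + INR n * (q 0%nat - 1) <= q n).
  { induction n as [| n IH]; [simpl; lra |].
    rewrite S_INR; pose proof (pos_INR n).
    assert (1 < q n) by nra.
    specialize (Hs n ltac:(lra)); nra. }
  intros M.
  destruct (INR_archimed (q 0%nat - 1) M) as [N HN]; [lra |].
  exists N; intros n Hn.
  pose proof (le_INR _ _ Hn); pose proof (Hlin n); nra.
Qed.

Lemma cv_infty_dominate_shift (q f : nat -> R) (c : R) :
  0 < c -> cv_infty q -> (forall n, c * q n <= f (S n)) -> cv_infty f.
Proof.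
  intros Hc Hq Hf M.
  destruct (Hq (M / c)) as [N HN].
  exists (S N); intros [| n] Hn; [lia |].
  specialize (HN n ltac:(lia)); specialize (Hf n).
  assert (c * (M / c) < c * q n) by (apply Rmult_lt_compat_l; lra).
  replace (c * (M / c)) with M in * by (field; lra); lra.
Qed.

Definition sums_product (s : R4) : R := (cx s + cy s) * (cu s + cv s).

Lemma sums_product_W_le (s : R4) :
  nonneg s -> sums_product (W s) <= sums_product s * sums_product s / 4.
Proof.
  destruct s as [x y u v]; unfold nonneg, sums_product, W; simpl; intros (?&?&?&?).
  (* with a = xu + xv + yu and b = yv the claim reads
     (a/2 + b/3)(a/2 + 2b/3) <= (a + b)^2 / 4 *)
  assert (0 <= x * u) by nra; assert (0 <= x * v) by nra;
  assert (0 <= y * u) by nra; assert (0 <= y * v) by nra.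
  nra.
Qed.

Lemma W_coords_bounded (s : R4) :
  nonneg s ->
  0 <= cx (W s) <= sums_product s /\ 0 <= cy (W s) <= sums_product s /\
  0 <= cu (W s) <= sums_product s /\ 0 <= cv (W s) <= sums_product s.
Proof.
  destruct s as [x y u v]; unfold nonneg, sums_product, W; simpl; intros (?&?&?&?).
  assert (0 <= x * u) by nra; assert (0 <= x * v) by nra;
  assert (0 <= y * u) by nra; assert (0 <= y * v) by nra.
  repeat split; nra.
Qed.

Lemma Witer_cv_0 (c : R4 -> R) (s : R4) (k : nat) :
  nonneg s -> (forall t, nonneg t -> 0 <= c (W t) <= sums_product t) ->
  sums_product (Witer k s) < 4 -> Un_cv (fun n => c (Witer n s)) 0.
Proof.
  intros Hs Hc Hk.
  set (p := fun n => sums_product (Witer n s)).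
  assert (Hp : forall n, 0 <= p n).
  { intro n; destruct (Witer_nonneg n s Hs) as (?&?&?&?).
    unfold p, sums_product; nra. }
  assert (Hdecay := quadratic_decay_le p k Hp
    (fun n => sums_product_W_le _ (Witer_nonneg n s Hs)) Hk).
  apply (CV_shift _ (S k)).
  apply (Un_cv_0_geometric_bound _ (p k) (p k / 4)).
  - pose proof (Hp k); rewrite Rabs_right by lra; unfold p in *; lra.
  - intro m; rewrite Nat.add_succ_r; simpl.
    pose proof (Hc _ (Witer_nonneg (m + k) s Hs)); pose proof (Hdecay m).
    unfold p in *; lra.
Qed.

Lemma Witer_cv_infty (f g : R4 -> R) (c : R) (s : R4) :
  0 < c -> nonneg s ->
  (forall t, nonneg t -> f t * g t / c <= f (W t)) ->
  (forall t, nonneg t -> f t * g t / c <= g (W t)) ->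
  c * c < f s * g s -> cv_infty (fun n => f (Witer n s)).
Proof.
  intros Hc Hs Hf Hg H0.
  set (q := fun n => f (Witer n s) * g (Witer n s) / (c * c)).
  assert (Hqc : forall n, q n * (c * c) = f (Witer n s) * g (Witer n s))
    by (intro n; unfold q; field; lra).
  assert (Hcq : forall n, f (Witer n s) * g (Witer n s) / c = c * q n)
    by (intro n; unfold q; field; lra).
  apply (cv_infty_dominate_shift q _ c Hc).
  - apply cv_infty_of_square_growth.
    + apply (Rmult_lt_reg_r (c * c)); [nra |]; rewrite Hqc; simpl; lra.
    + intros n Hn.
      pose proof (Hf _ (Witer_nonneg n s Hs)) as Hfn.
      pose proof (Hg _ (Witer_nonneg n s Hs)) as Hgn.
      rewrite Hcq in Hfn, Hgn.
      apply (Rmult_le_reg_r (c * c)); [nra |]; rewrite Hqc; simpl.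
      assert (c * q n * (c * q n) <= f (W (Witer n s)) * g (W (Witer n s)))
        by (apply Rmult_le_compat; nra).
      nra.
  - intro n; rewrite <- Hcq; apply Hf, Witer_nonneg, Hs.
Qed.

Lemma W_growth_xu (s : R4) :
  nonneg s -> cx s * cu s / 2 <= cx (W s) /\ cx s * cu s / 2 <= cu (W s).
Proof.
  destruct s as [x y u v]; unfold nonneg, W; simpl; intros (?&?&?&?).
  split; nra.
Qed.

Lemma W_growth_yu (s : R4) :
  nonneg s -> cy s * cu s / 4 <= cy (W s) /\ cy s * cu s / 4 <= cu (W s).
Proof.
  destruct s as [x y u v]; unfold nonneg, W; simpl; intros (?&?&?&?).
  split; nra.
Qed.

Lemma W_growth_yv (s : R4) :
  nonneg s -> cy s * cv s / 3 <= cy (W s) /\ cy s * cv s / 3 <= cv (W s).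
Proof.
  destruct s as [x y u v]; unfold nonneg, W; simpl; intros (?&?&?&?).
  split; nra.
Qed.

Theorem lemma3p5 (x y u v : R) :
  0 <= x -> 0 <= y -> 0 <= u -> 0 <= v -> x + y + u + v > 4 ->
  (* (a) *)
  ((exists k : nat,
      (cx (Witer k (mkR4 x y u v)) + cy (Witer k (mkR4 x y u v))) *
      (cu (Witer k (mkR4 x y u v)) + cv (Witer k (mkR4 x y u v))) < 4) ->
    Un_cv (fun n => cx (Witer n (mkR4 x y u v))) 0 /\
    Un_cv (fun n => cy (Witer n (mkR4 x y u v))) 0 /\
    Un_cv (fun n => cu (Witer n (mkR4 x y u v))) 0 /\
    Un_cv (fun n => cv (Witer n (mkR4 x y u v))) 0)
  /\
  (* (b) *)
  (Rmax (x * u / 4) (Rmax (y * u / 16) (y * v / 9)) > 1 ->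
    cv_infty (fun n => cx (Witer n (mkR4 x y u v))) \/
    cv_infty (fun n => cy (Witer n (mkR4 x y u v))) \/
    cv_infty (fun n => cu (Witer n (mkR4 x y u v))) \/
    cv_infty (fun n => cv (Witer n (mkR4 x y u v)))).
Proof.
  intros Hx Hy Hu Hv _.
  assert (Hs : nonneg (mkR4 x y u v)) by (repeat split; assumption).
  split.
  - intros [k Hk].
    repeat split; apply (Witer_cv_0 _ _ k Hs); auto;
      intros t Ht; apply (W_coords_bounded t Ht).
  - intros Hmax.
    assert (Hxu : 1 < x * u / 4 -> cv_infty (fun n => cx (Witer n (mkR4 x y u v)))).
    { intro H; apply (Witer_cv_infty cx cu 2); simpl; try lra; try exact Hs;
        intros t Ht; apply (W_growth_xu t Ht). }
    assert (Hyu : 1 < y * u / 16 -> cv_infty (fun n => cy (Witer n (mkR4 x y u v)))).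
    { intro H; apply (Witer_cv_infty cy cu 4); simpl; try lra; try exact Hs;
        intros t Ht; apply (W_growth_yu t Ht). }
    assert (Hyv : 1 < y * v / 9 -> cv_infty (fun n => cy (Witer n (mkR4 x y u v)))).
    { intro H; apply (Witer_cv_infty cy cv 3); simpl; try lra; try exact Hs;
        intros t Ht; apply (W_growth_yv t Ht). }
    unfold Rmax in Hmax.
    destruct (Rle_dec (y * u / 16) (y * v / 9)); destruct (Rle_dec (x * u / 4) _);
      auto with real.
Qed.
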